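(* Let $c\ge2$ and let $\mathcal{D}$ be a domain. Then the measure $\mathsf{FKIs}_{\mathcal{D}^\circ,c}$ on $\{0,1\}^{E(\mathcal{D}^\circ)}$ satisfies the FKG lattice condition, and hence is positively associated.
   Context: Weights $a=b=1$. Faces of $\mathbb{Z}^2$ are centered at integer points; the face $(i,j)$ is even if $i+j$ is even, odd otherwise. A domain $\mathcal{D}$ is a finite subgraph of $\mathbb{Z}^2$ consisting of a simple cycle $\partial\mathcal{D}$ with everything it encloses. An ice-rule spin configuration is $\sigma\colon F(\mathbb{Z}^2)\to\{\pm1\}$ such that around every vertex at least one diagonal pair of faces has equal spins; a vertex is of type $c$ if both diagonal pairs agree. $\mathsf{Spin}_{\mathcal{D},c}^{++}$ is the measure on ice-rule configurations equal to $+1$ on all faces outside $\mathcal{D}$, proportional to $c^{N_c}$ with $N_c$ the number of type-$c$ vertices of $\mathcal{D}$. A corner of $\mathcal{D}$ is a pair $(u,z)$ with $u$ a face outside $\mathcal{D}$ sharing an edge with a face of $\mathcal{D}$ and $z$ a vertex of $\partial\mathcal{D}$ on $u$. $\mathcal{D}^\bullet$ is the graph on even faces of $\mathcal{D}$ and even corners with edges between even faces of $\mathcal{D}$ sharing a vertex, between a corner $(u,z)$ and an even face $v\ni z$ of $\mathcal{D}$, and between corners $(u,z),(v,z)$, after identifying corners $(u,z),(u,z')$ when $zz'$ is an edge of $\mathcal{D}$; $\mathcal{D}^\circ$ is defined likewise with odd faces and corners. Edges of both are in bijection with vertices of $\mathcal{D}$; $e\in E(\mathcal{D}^\circ)$ and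 $e^*\in E(\mathcal{D}^\bullet)$ denote dual edges. Spins extend to corners by $\sigma(u,z)=\sigma(u)$. $\theta(\sigma^\circ)$ is the set of edges of $\mathcal{D}^\circ$ whose endpoints have different spins; $\omega(\sigma^\bullet)$ is the set of edges $e$ of $\mathcal{D}^\circ$ whose dual $e^*$ has endpoints with different spins. Given $\sigma$, $\xi\in\{0,1\}^{E(\mathcal{D}^\circ)}$ is defined by: $\xi(e)=0$ on $\theta(\sigma^\circ)$, $\xi(e)=1$ on $\omega(\sigma^\bullet)$, otherwise independently $\xi(e)=1$ with probability $(c-1)/c$. $\mathsf{FKIs}_{\mathcal{D}^\circ,c}$ is the law of $\xi$ when $\sigma\sim\mathsf{Spin}_{\mathcal{D},c}^{++}$. The FKG lattice condition for $\mu$ on $\{0,1\}^{E}$ with the pointwise order is $\mu(\xi\vee\xi')\mu(\xi\wedge\xi')\ge\mu(\xi)\mu(\xi')$. *)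

From HB Require Import structures.
From mathcomp Require Import all_boot all_order all_algebra.
Set Implicit Arguments. Unset Strict Implicit. Unset Printing Implicit Defensive.
Import Order.TTheory GRing.Theory Num.Theory.
Local Open Scope ring_scope.

(* Points of Z^2.  A face (i,j) is the unit square centred at (i,j).
   A VERTEX is also written as a pair (x,y) : it denotes the lattice point
   (x+1/2, y+1/2), whose four surrounding faces are
   SW = (x,y), SE = (x+1,y), NW = (x,y+1), NE = (x+1,y+1). *)
Definition pt := (int * int)%type.

Definition fSW (v : pt) : pt := v.
Definition fSE (v : pt) : pt := (v.1 + 1, v.2).
Definition fNW (v : pt) : pt := (v.1, v.2 + 1).
Definition fNE (v : pt) : pt := (v.1 + 1, v.2 + 1).

Definition face_odd (f : pt) : bool := odd (absz (f.1 + f.2)).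

Definition adjv (u w : pt) : bool :=
  (absz (u.1 - w.1) + absz (u.2 - w.2) == 1)%N.

Definition simple_cycle (p : seq pt) : bool :=
  [&& (3 <= size p)%N, uniq p & cycle adjv p].

(* Jordan even-odd rule: the edge e = (u,w) of the cycle crosses the
   horizontal ray going from the centre of face f to the right
   (a vertical edge at abscissa u.1 + 1/2 >= f.1 + 1/2, spanning
   heights f.2 - 1/2 .. f.2 + 1/2). *)
Definition crosses (f : pt) (e : pt * pt) : bool :=
  let: (u, w) := e in
  [&& u.1 == w.1, f.1 <= u.1 &
     (((u.2 == f.2 - 1) && (w.2 == f.2)) || ((w.2 == f.2 - 1) && (u.2 == f.2)))].

Definition enclosed (p : seq pt) (f : pt) : bool :=
  odd (count (crosses f) (zip p (rot 1 p))).

(* a box of points containing every vertex of p together with all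
   faces/vertices of the domain it encloses *)
Definition bnd (p : seq pt) : nat := (\sum_(v <- p) (absz v.1 + absz v.2))%N.
Definition irange (m : nat) : seq int := [seq (i%:Z - m%:Z) | i <- iota 0 (m.*2.+1)].
Definition gridbox (p : seq pt) : seq pt :=
  let r := irange (bnd p).+1 in [seq (a, b) | a <- r, b <- r].

Definition Dface_list (p : seq pt) : seq pt := [seq f <- gridbox p | enclosed p f].
Definition Dvert_list (p : seq pt) : seq pt :=
  [seq v <- gridbox p | has (fun f => f \in Dface_list p) [:: fSW v; fSE v; fNW v; fNE v]].

Definition Dface (p : seq pt) : finType := seq_sub (Dface_list p).
Definition Dvert (p : seq pt) : finType := seq_sub (Dvert_list p).

(* spins: true = +1, false = -1; a configuration is given on the faces of D
   and extended by +1 outside D *)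
Definition spin_ext (p : seq pt) (s : {ffun Dface p -> bool}) (f : pt) : bool :=
  match (insub f : option (Dface p)) with Some g => s g | None => true end.

Definition ice_at (s : pt -> bool) (v : pt) : bool :=
  (s (fSW v) == s (fNE v)) || (s (fSE v) == s (fNW v)).
Definition typec_at (s : pt -> bool) (v : pt) : bool :=
  (s (fSW v) == s (fNE v)) && (s (fSE v) == s (fNW v)).

(* ice rule around every vertex (outside D all spins are +1, so only the
   vertices of D matter) *)
Definition ice_config (p : seq pt) (s : {ffun Dface p -> bool}) : bool :=
  [forall v : Dvert p, ice_at (spin_ext s) (val v)].

Definition Nc (p : seq pt) (s : {ffun Dface p -> bool}) : nat :=
  #|[set v : Dvert p | typec_at (spin_ext s) (val v)]|.

Definition spin_weight (R : realFieldType) (c : R) (p : seq pt)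
  (s : {ffun Dface p -> bool}) : R :=
  if ice_config s then c ^+ Nc s else 0.

Definition Spin (R : realFieldType) (c : R) (p : seq pt)
  (s : {ffun Dface p -> bool}) : R :=
  spin_weight c s / \sum_(s' : {ffun Dface p -> bool}) spin_weight c s'.

(* Edges of D° (and their duals in D•) are indexed by the vertices of D:
   the edge e at v joins the two odd faces/corners of v, e* joins the two
   even ones; corners carry the spin of their (outside) face, i.e. +1. *)
Definition theta_at (s : pt -> bool) (v : pt) : bool :=
  if face_odd (fSW v) then s (fSW v) != s (fNE v) else s (fSE v) != s (fNW v).
Definition omega_at (s : pt -> bool) (v : pt) : bool :=
  if face_odd (fSW v) then s (fSE v) != s (fNW v) else s (fSW v) != s (fNE v).

Definition xi_kernel (R : realFieldType) (c : R) (s : pt -> bool) (v : pt)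
  (b : bool) : R :=
  if theta_at s v then (if b then 0 else 1)
  else if omega_at s v then (if b then 1 else 0)
  else (if b then (c - 1) / c else 1 / c).

Definition FKIs (R : realFieldType) (c : R) (p : seq pt)
  (xi : {ffun Dvert p -> bool}) : R :=
  \sum_(s : {ffun Dface p -> bool})
     Spin c s * \prod_(v : Dvert p) xi_kernel c (spin_ext s) (val v) (xi v).

Definition cfg_join (T : finType) (x y : {ffun T -> bool}) : {ffun T -> bool} :=
  [ffun e => x e || y e].
Definition cfg_meet (T : finType) (x y : {ffun T -> bool}) : {ffun T -> bool} :=
  [ffun e => x e && y e].
Definition cfg_le (T : finType) (x y : {ffun T -> bool}) : bool :=
  [forall e, x e ==> y e].

Definition FKG_lattice (T : finType) (R : realFieldType)
  (mu : {ffun T -> bool} -> R) : Prop :=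
  forall x y : {ffun T -> bool},
    mu x * mu y <= mu (cfg_join x y) * mu (cfg_meet x y).

Definition increasing (T : finType) (R : realFieldType)
  (f : {ffun T -> bool} -> R) : Prop :=
  forall x y : {ffun T -> bool}, cfg_le x y -> f x <= f y.

Definition expect (T : finType) (R : realFieldType)
  (mu : {ffun T -> bool} -> R) (f : {ffun T -> bool} -> R) : R :=
  \sum_(x : {ffun T -> bool}) mu x * f x.

Definition positively_associated (T : finType) (R : realFieldType)
  (mu : {ffun T -> bool} -> R) : Prop :=
  forall f g : {ffun T -> bool} -> R, increasing f -> increasing g ->
    expect mu f * expect mu g <= expect mu (fun x => f x * g x).

From mathcomp Require Import all_boot all_order all_algebra.
From mathcomp Require Import ring lra.
Set Implicit Arguments. Unset Strict Implicit. Unset Printing Implicit Defensive.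
Import Order.TTheory GRing.Theory Num.Theory.
Local Open Scope ring_scope.

(** At a vertex [v], the six-vertex weight times the law of [xi(v)] depends
    only on [xi(v)] and on whether the two odd faces, resp. the two even
    faces, of [v] carry equal spins.  Introducing an auxiliary configuration
    [l] (the weight [c - 2] of one of its states is where [c >= 2] is used),
    FKIs becomes the marginal in [xi] of a measure on pairs [(xi, l)] equal
    to a product of log-supermodular vertex weights times the number of spin
    configurations whose odd faces agree across every edge of [xi] and whose
    even faces agree across every dual edge outside [l].  Odd and even spins
    are independent, so this number is [|C(xi)| |C'(l)| / 2^|F|], where
    [C(xi)] and [C'(l)] are subgroups of the spin configurations under
    pointwise XNOR; the product formula [|U| |W| <= |U W| |U :&: W|] for
    subgroups makes both factors log-supermodular.  The Ahlswede-Daykin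
    four functions theorem then yields the lattice condition for the
    marginal, and (applied once more) Harris' inequality. *)

Section ConfigurationLattice.
Variable I : finType.
Implicit Types x y : {ffun I -> bool}.

Definition cfg_compl x : {ffun I -> bool} := [ffun i => ~~ x i].

Lemma cfg_compl_join x y :
  cfg_compl (cfg_join x y) = cfg_meet (cfg_compl x) (cfg_compl y).
Proof. by apply/ffunP => i; rewrite !ffunE negb_or. Qed.

Lemma cfg_compl_meet x y :
  cfg_compl (cfg_meet x y) = cfg_join (cfg_compl x) (cfg_compl y).
Proof. by apply/ffunP => i; rewrite !ffunE negb_and. Qed.

Lemma cfg_le0 x : cfg_le [ffun=> false] x.
Proof. by apply/forallP => i; rewrite ffunE. Qed.

Lemma cfg_le_joinl x y : cfg_le x (cfg_join x y).
Proof. by apply/forallP => i; rewrite ffunE; apply/implyP => ->. Qed.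

Lemma cfg_le_joinr x y : cfg_le y (cfg_join x y).
Proof. by apply/forallP => i; rewrite ffunE orbC; apply/implyP => ->. Qed.

Lemma cfg_le_meetl x y : cfg_le (cfg_meet x y) x.
Proof. by apply/forallP => i; rewrite ffunE; apply/implyP => /andP[]. Qed.

Lemma cfg_le_meetr x y : cfg_le (cfg_meet x y) y.
Proof. by apply/forallP => i; rewrite ffunE; apply/implyP => /andP[]. Qed.

End ConfigurationLattice.

(** * The four functions theorem *)

Lemma lerD_of_mul_le (R : realFieldType) (u v w z : R) :
  0 <= u -> 0 <= v -> 0 <= z -> u <= w -> v <= w -> u * v <= w * z ->
  u + v <= w + z.
Proof.
move=> u_ge0 v_ge0 z_ge0 le_uw le_vw le_uv_wz.
have [w_gt0|w_le0] := ltP 0 w; last by lra.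
(* [(w - u) (w - v) >= 0] gives [w (u + v) <= w^2 + u v <= w (w + z)]. *)
have : 0 <= (w - u) * (w - v) by rewrite mulr_ge0 // subr_ge0.
by move=> h; rewrite -(ler_pM2l w_gt0); nra.
Qed.

Lemma four_functions_bool (R : realFieldType) (a0 a1 b0 b1 c0 c1 d0 d1 : R) :
  0 <= a0 -> 0 <= a1 -> 0 <= b0 -> 0 <= b1 ->
  0 <= c0 -> 0 <= c1 -> 0 <= d0 -> 0 <= d1 ->
  a0 * b0 <= c0 * d0 -> a0 * b1 <= c1 * d0 -> a1 * b0 <= c1 * d0 ->
  a1 * b1 <= c1 * d1 ->
  (a0 + a1) * (b0 + b1) <= (c0 + c1) * (d0 + d1).
Proof.
move=> a0_ge0 a1_ge0 b0_ge0 b1_ge0 c0_ge0 c1_ge0 d0_ge0 d1_ge0 h00 h01 h10 h11.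
have mixed : a0 * b1 + a1 * b0 <= c1 * d0 + c0 * d1.
  apply: lerD_of_mul_le; rewrite ?mulr_ge0 //.
  have -> : a0 * b1 * (a1 * b0) = (a0 * b0) * (a1 * b1) by ring.
  have -> : c1 * d0 * (c0 * d1) = (c0 * d0) * (c1 * d1) by ring.
  by apply: ler_pM; rewrite ?mulr_ge0.
have -> : (a0 + a1) * (b0 + b1) = a0 * b0 + a1 * b1 + (a0 * b1 + a1 * b0) by ring.
have -> : (c0 + c1) * (d0 + d1) = c0 * d0 + c1 * d1 + (c1 * d0 + c0 * d1) by ring.
by apply: lerD => //; apply: lerD.
Qed.

Section FourFunctions.
Variables (R : realFieldType) (I : finType).
Implicit Types (x y : {ffun I -> bool}) (h : {ffun I -> bool} -> R).

Definition cfg_upd x a b : {ffun I -> bool} := [ffun i => if i == a then b else x i].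

Definition agree_off (s : seq I) x x' := [forall i, (i \notin s) ==> (x' i == x i)].

Definition sum_agree_off h s x := \sum_(x' | agree_off s x x') h x'.

Lemma sum_agree_off_nil h x : sum_agree_off h [::] x = h x.
Proof.
rewrite /sum_agree_off (big_pred1 x) // => x'; apply/forallP/eqP => [agr|->].
  by apply/ffunP => i; apply/eqP; exact: agr.
by move=> i; rewrite eqxx implybT.
Qed.

Lemma sum_agree_off_cons_mem h a s x :
  a \in s -> sum_agree_off h (a :: s) x = sum_agree_off h s x.
Proof.
move=> a_s; apply: eq_bigl => x'; apply: eq_forallb => i.
by rewrite in_cons negb_or; case: eqP => //= ->; rewrite a_s.
Qed.

Lemma agree_off_cons a s x x' b : a \notin s ->
  (agree_off (a :: s) x x' && (x' a == b)) = agree_off s (cfg_upd x a b) x'.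
Proof.
move=> a_s; apply/andP/forallP => [[/forallP agr x'a] i|agr].
  rewrite ffunE; have [->|ne] := eqVneq i a; first by rewrite a_s.
  by move: (agr i); rewrite in_cons negb_or ne.
split; last by move: (agr a); rewrite a_s ffunE eqxx.
apply/forallP => i; rewrite in_cons negb_or; apply/implyP => /andP[ne i_s].
by move: (agr i); rewrite i_s ffunE (negbTE ne).
Qed.

Lemma sum_agree_off_cons h a s x : a \notin s ->
  sum_agree_off h (a :: s) x =
  sum_agree_off h s (cfg_upd x a false) + sum_agree_off h s (cfg_upd x a true).
Proof.
move=> a_s; rewrite /sum_agree_off (bigID (fun x' : {ffun I -> bool} => x' a)) addrC.
by congr (_ + _); apply: eq_bigl => x'; rewrite -agree_off_cons //; case: (x' a);
  rewrite ?andbT ?andbF.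
Qed.

Lemma cfg_join_upd x y a b b' :
  cfg_join (cfg_upd x a b) (cfg_upd y a b') = cfg_upd (cfg_join x y) a (b || b').
Proof. by apply/ffunP => i; rewrite !ffunE; case: eqP. Qed.

Lemma cfg_meet_upd x y a b b' :
  cfg_meet (cfg_upd x a b) (cfg_upd y a b') = cfg_upd (cfg_meet x y) a (b && b').
Proof. by apply/ffunP => i; rewrite !ffunE; case: eqP. Qed.

Variables al be ga de : {ffun I -> bool} -> R.
Hypotheses (al_ge0 : forall x, 0 <= al x) (be_ge0 : forall x, 0 <= be x).
Hypotheses (ga_ge0 : forall x, 0 <= ga x) (de_ge0 : forall x, 0 <= de x).
Hypothesis four_le : forall x y, al x * be y <= ga (cfg_join x y) * de (cfg_meet x y).

Lemma four_functions_agree_off s x y :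
  sum_agree_off al s x * sum_agree_off be s y <=
  sum_agree_off ga s (cfg_join x y) * sum_agree_off de s (cfg_meet x y).
Proof.
elim: s x y => [|a s IHs] x y; first by rewrite !sum_agree_off_nil.
have [a_s|a_s] := boolP (a \in s); first by rewrite !sum_agree_off_cons_mem.
have IHupd b b' :
    sum_agree_off al s (cfg_upd x a b) * sum_agree_off be s (cfg_upd y a b') <=
    sum_agree_off ga s (cfg_upd (cfg_join x y) a (b || b')) *
    sum_agree_off de s (cfg_upd (cfg_meet x y) a (b && b')).
  by rewrite -cfg_join_upd -cfg_meet_upd.
by rewrite !sum_agree_off_cons //; apply: four_functions_bool;
  rewrite ?sumr_ge0 //; apply: IHupd.
Qed.

Theorem four_functions :
  (\sum_x al x) * (\sum_x be x) <= (\sum_x ga x) * (\sum_x de x).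
Proof.
have agree_all x x' : agree_off (enum I) x x'.
  by apply/forallP => i; rewrite mem_enum.
have := four_functions_agree_off (enum I) [ffun=> false] [ffun=> false].
by rewrite /sum_agree_off !(eq_bigl _ _ (agree_all _)).
Qed.

End FourFunctions.

(** * The FKG lattice condition and positive association *)

Section FKG.
Variable R : realFieldType.

Lemma FKG_lattice_marginal (I J : finType)
    (mu : {ffun I -> bool} -> {ffun J -> bool} -> R) :
  (forall x l, 0 <= mu x l) ->
  (forall x y l l', mu x l * mu y l' <=
     mu (cfg_join x y) (cfg_join l l') * mu (cfg_meet x y) (cfg_meet l l')) ->
  FKG_lattice (fun x => \sum_l mu x l).
Proof. by move=> mu_ge0 mu_le x y; apply: four_functions. Qed.

Lemma FKG_latticeZ (I : finType) (k : R) (mu : {ffun I -> bool} -> R) :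
  0 <= k -> FKG_lattice mu -> FKG_lattice (fun x => k * mu x).
Proof.
move=> k_ge0 mu_FKG x y.
by rewrite mulrACA [X in _ <= X]mulrACA ler_wpM2l ?mulr_ge0.
Qed.

Variable I : finType.
Implicit Types (m f g : {ffun I -> bool} -> R).

Lemma covariance_shift m f g a b : \sum_x m x = 1 ->
  expect m (fun x => (f x - a) * (g x - b))
    - expect m (fun x => f x - a) * expect m (fun x => g x - b)
  = expect m (fun x => f x * g x) - expect m f * expect m g.
Proof.
move=> m_sum1.
have expect_cst k : k = \sum_x m x * k by rewrite -mulr_suml m_sum1 mul1r.
have expect_subr h k : expect m (fun x => h x - k) = expect m h - k.
  rewrite [in RHS](expect_cst k) /expect -sumrB.
  by apply: eq_bigr => x _; rewrite mulrBr.
have -> : expect m (fun x => (f x - a) * (g x - b)) =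
    expect m (fun x => f x * g x) - a * expect m g - b * expect m f + a * b.
  rewrite [in RHS](expect_cst (a * b)) /expect !mulr_sumr -!sumrB -big_split /=.
  by apply: eq_bigr => x _; ring.
by rewrite !expect_subr; ring.
Qed.

Theorem FKG_positively_associated m :
  (forall x, 0 <= m x) -> \sum_x m x = 1 -> FKG_lattice m ->
  positively_associated m.
Proof.
move=> m_ge0 m_sum1 m_FKG f g f_incr g_incr.
pose f0 := f [ffun=> false]; pose g0 := g [ffun=> false].
have f_ge x : 0 <= f x - f0 by rewrite subr_ge0 f_incr ?cfg_le0.
have g_ge x : 0 <= g x - g0 by rewrite subr_ge0 g_incr ?cfg_le0.
rewrite -subr_ge0 -(covariance_shift f g f0 g0 m_sum1) subr_ge0.
have := @four_functions R I (fun x => m x * (f x - f0)) (fun x => m x * (g x - g0))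
  (fun x => m x * ((f x - f0) * (g x - g0))) m.
rewrite m_sum1 mulr1; apply=> // [x|x|x|x y]; rewrite ?mulr_ge0 //.
rewrite mulrACA [X in _ <= X]mulrAC; apply: ler_pM; rewrite ?mulr_ge0 //.
by apply: ler_pM; rewrite // lerD2r ?f_incr ?g_incr ?cfg_le_joinl ?cfg_le_joinr.
Qed.

End FKG.

(** * Subgroups of spin configurations under XNOR *)

Section XnorCounting.
Variable T : finType.
Implicit Types a b k : {ffun T -> bool}.

Definition cfg_xnor a b : {ffun T -> bool} := [ffun i => a i == b i].

Lemma cfg_xnorKl a b : cfg_xnor a (cfg_xnor a b) = b.
Proof. by apply/ffunP => i; rewrite !ffunE; case: (a i); case: (b i). Qed.

Lemma cfg_xnorKr a b : cfg_xnor (cfg_xnor a b) b = a.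
Proof. by apply/ffunP => i; rewrite !ffunE; case: (a i); case: (b i). Qed.

Lemma cfg_xnor_swap a b a' b' :
  cfg_xnor a b = cfg_xnor a' b' -> cfg_xnor a a' = cfg_xnor b b'.
Proof.
move=> /ffunP eq_ab; apply/ffunP => i; move: (eq_ab i); rewrite !ffunE.
by case: (a i); case: (b i); case: (a' i); case: (b' i).
Qed.

(* Writing [*] for [cfg_xnor], each fibre [{(u, w) | u * w = k}] injects
   into [U :&: W] through [(u, w) |-> u * u0], [(u0, w0)] in the fibre. *)
Lemma leq_card_xnor_closed (U W K J : {set {ffun T -> bool}}) :
  {in U &, forall u u', cfg_xnor u u' \in U} ->
  {in W &, forall w w', cfg_xnor w w' \in W} ->
  {in U & W, forall u w, cfg_xnor u w \in K} ->
  U :&: W \subset J ->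
  (#|U| * #|W| <= #|K| * #|J|)%N.
Proof.
move=> xnorU xnorW xnorUW sUWJ.
rewrite -cardsX -sum1_card (partition_big (fun q => cfg_xnor q.1 q.2) (mem K)) /=;
  last by move=> [u w] /setXP[]; apply: xnorUW.
rewrite -sum_nat_const; apply: leq_sum => k _; rewrite sum1_card.
set fibre := [pred q | (q \in setX U W) && (cfg_xnor q.1 q.2 == k)].
have [[u0 w0] /andP[/setXP[u0U w0W] /eqP/= k0]|fibre0] := pickP fibre;
  last by rewrite eq_card0.
have inj : {in fibre &, injective (fun q => cfg_xnor q.1 u0)}.
  move=> [u w] [u' w'] /andP[_ /eqP/= k1] /andP[_ /eqP/= k2] /= eq_u.
  have eu : u = u' by rewrite -(cfg_xnorKr u u0) eq_u cfg_xnorKr.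
  by rewrite -(cfg_xnorKl u w) -(cfg_xnorKl u' w') k1 k2 eu.
rewrite -(card_in_imset inj); apply: subset_leq_card; apply/subsetP => z.
move=> /imsetP[[u w] /andP[/setXP[uU wW] /eqP/= k1] ->].
apply: (subsetP sUWJ); rewrite inE xnorU //=.
by rewrite (@cfg_xnor_swap u w u0 w0) ?k1 ?k0 // xnorW.
Qed.

Variable od : pred T.

Definition cfg_mix a b : {ffun T -> bool} := [ffun i => if od i then a i else b i].

Lemma card_setI_mix (X Y : {set {ffun T -> bool}}) :
  (forall a b, (cfg_mix a b \in X) = (a \in X)) ->
  (forall a b, (cfg_mix a b \in Y) = (b \in Y)) ->
  (#|X :&: Y| * #|[set: {ffun T -> bool}]| = #|X| * #|Y|)%N.
Proof.
move=> mixX mixY; rewrite -!cardsX.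
pose swap (q : {ffun T -> bool} * {ffun T -> bool}) :=
  (cfg_mix q.1 q.2, cfg_mix q.2 q.1).
have swapK : involutive swap.
  by move=> [a b]; congr (_, _); apply/ffunP => i; rewrite !ffunE /=; case: (od i).
have swap_inj := inv_inj swapK.
apply/eqP; rewrite eqn_leq; apply/andP; split;
  rewrite -(card_imset _ swap_inj); apply: subset_leq_card; apply/subsetP => _
  /imsetP[[a b] /setXP[Xa Yb] ->]; apply/setXP; rewrite /= ?mixX ?mixY.
  by case/setIP: Xa.
by split; rewrite ?in_setT // inE mixX mixY Xa Yb.
Qed.

End XnorCounting.

Section Constraints.
Variables (T V : finType) (P : V -> pred {ffun T -> bool}).

Definition constrained (x : {ffun V -> bool}) : {set {ffun T -> bool}} :=
  [set s | [forall v, x v ==> P v s]].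

Lemma constrainedS x y : cfg_le x y -> constrained y \subset constrained x.
Proof.
move=> /forallP le_xy; apply/subsetP => s; rewrite !inE => /forallP Py.
by apply/forallP => v; apply/implyP => /(implyP (le_xy v)); apply/implyP.
Qed.

Lemma constrained_join x y :
  constrained (cfg_join x y) = constrained x :&: constrained y.
Proof.
apply/setP => s; rewrite !inE; apply/forallP/andP => [Pxy|[/forallP Px /forallP Py] v].
  split; apply/forallP => v; move: (Pxy v); rewrite ffunE.
    by case: (x v); case: (y v); case: (P v s).
  by case: (x v); case: (y v); case: (P v s).
by move: (Px v) (Py v); rewrite ffunE; case: (x v); case: (y v); case: (P v s).
Qed.

Hypothesis P_xnor : forall v a b, P v a -> P v b -> P v (cfg_xnor a b).

Lemma constrained_xnor x :
  {in constrained x &, forall a b, cfg_xnor a b \in constrained x}.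
Proof.
move=> a b; rewrite !inE => /forallP Pa /forallP Pb; apply/forallP => v.
by apply/implyP => xv; apply: P_xnor; [move: (Pa v)|move: (Pb v)]; rewrite xv.
Qed.

Lemma constrained_lattice x y :
  (#|constrained x| * #|constrained y| <=
   #|constrained (cfg_meet x y)| * #|constrained (cfg_join x y)|)%N.
Proof.
apply: leq_card_xnor_closed; rewrite ?constrained_join //; try exact: constrained_xnor.
move=> a b xa yb; apply: constrained_xnor.
  exact: subsetP (constrainedS (cfg_le_meetl x y)) a xa.
exact: subsetP (constrainedS (cfg_le_meetr x y)) b yb.
Qed.

End Constraints.

(** * Odd and even agreement constraints *)

Lemma odd_absz_addz1 (z : int) : odd `|z + 1| = ~~ odd `|z|.
Proof.
case: z => n; first by rewrite -PoszD addn1.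
rewrite NegzE (_ : _ + 1 = - n%:Z); last by rewrite -addn1 PoszD opprD addrK.
by rewrite !abszN /= negbK.
Qed.

Lemma face_odd_SE v : face_odd (fSE v) = ~~ face_odd (fSW v).
Proof. by rewrite /face_odd /= addrAC odd_absz_addz1. Qed.

Lemma face_odd_NW v : face_odd (fNW v) = ~~ face_odd (fSW v).
Proof. by rewrite /face_odd /= addrA odd_absz_addz1. Qed.

Lemma face_odd_NE v : face_odd (fNE v) = face_odd (fSW v).
Proof.
by rewrite /face_odd /= addrA odd_absz_addz1 addrAC odd_absz_addz1 negbK.
Qed.

Section SpinConstraints.
Variable p : seq pt.
Local Notation G := {ffun Dface p -> bool}.
Local Notation E := {ffun Dvert p -> bool}.

Definition odd_agree (v : Dvert p) (s : G) := ~~ theta_at (spin_ext s) (val v).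
Definition even_agree (v : Dvert p) (s : G) := ~~ omega_at (spin_ext s) (val v).

Definition odd_face (f : Dface p) := face_odd (val f).

Lemma spin_ext_xnor (a b : G) f :
  spin_ext (cfg_xnor a b) f = (spin_ext a f == spin_ext b f).
Proof. by rewrite /spin_ext; case: insub => // g; rewrite ffunE. Qed.

Lemma spin_ext_mix (a b : G) f :
  spin_ext (cfg_mix odd_face a b) f =
  if face_odd f then spin_ext a f else spin_ext b f.
Proof.
rewrite /spin_ext; case: insubP => [g _ <-|_]; first by rewrite ffunE.
by case: ifP.
Qed.

Lemma odd_agree_mix a b v : odd_agree v (cfg_mix odd_face a b) = odd_agree v a.
Proof.
rewrite /odd_agree /theta_at !spin_ext_mix face_odd_NE face_odd_SE face_odd_NW.
by case: face_odd.
Qed.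

Lemma even_agree_mix a b v : even_agree v (cfg_mix odd_face a b) = even_agree v b.
Proof.
rewrite /even_agree /omega_at !spin_ext_mix face_odd_NE face_odd_SE face_odd_NW.
by case: face_odd.
Qed.

Lemma odd_agree_xnor v a b :
  odd_agree v a -> odd_agree v b -> odd_agree v (cfg_xnor a b).
Proof.
rewrite /odd_agree /theta_at !spin_ext_xnor.
by case: face_odd; rewrite !negbK => /eqP-> /eqP->.
Qed.

Lemma even_agree_xnor v a b :
  even_agree v a -> even_agree v b -> even_agree v (cfg_xnor a b).
Proof.
rewrite /even_agree /omega_at !spin_ext_xnor.
by case: face_odd; rewrite !negbK => /eqP-> /eqP->.
Qed.

(* In the paper's notation: [theta(s)] misses [xi] and [omega(s)] lies in [l]. *)
Definition compatible (xi l : E) : {set G} :=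
  constrained odd_agree xi :&: constrained even_agree (cfg_compl l).

Lemma card_compatible xi l :
  (#|compatible xi l| * #|[set: G]| =
   #|constrained odd_agree xi| * #|constrained even_agree (cfg_compl l)|)%N.
Proof.
by apply: (card_setI_mix (od := odd_face)) => a b; rewrite !inE;
  apply: eq_forallb => v; rewrite ?odd_agree_mix ?even_agree_mix.
Qed.

Lemma card_compatible_lattice xi eta l l' :
  (#|compatible xi l| * #|compatible eta l'| <=
   #|compatible (cfg_join xi eta) (cfg_join l l')| *
   #|compatible (cfg_meet xi eta) (cfg_meet l l')|)%N.
Proof.
have GG_gt0 : (0 < #|[set: G]| * #|[set: G]|)%N.
  by rewrite muln_gt0 andbb; apply/card_gt0P; exists [ffun=> true].
rewrite -(leq_pmul2r GG_gt0) mulnACA [X in (_ <= X)%N]mulnACA.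
rewrite !card_compatible mulnACA [X in (_ <= X)%N]mulnACA.
apply: leq_mul.
  by rewrite [X in (_ <= X)%N]mulnC (constrained_lattice (@odd_agree_xnor)).
by rewrite cfg_compl_join cfg_compl_meet (constrained_lattice (@even_agree_xnor)).
Qed.

End SpinConstraints.

(** * Vertex factorisation of FKIs *)

Lemma prodr_natr_bool (R : realFieldType) (I : finType) (P : pred I) :
  \prod_i ((P i)%:R : R) = ([forall i, P i])%:R.
Proof.
have [/forallP allP|/forallPn[i notPi]] := boolP [forall i, P i].
  by apply: big1 => i _; rewrite allP.
by rewrite (bigD1 i) //= (negbTE notPi) mul0r.
Qed.

Lemma sumr_natr_mem (R : realFieldType) (I : finType) (A : {set I}) :
  \sum_i ((i \in A)%:R : R) = #|A|%:R.
Proof.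
rewrite -sum1_card natr_sum [in RHS]big_mkcond /=.
by apply: eq_bigr => i _; case: (i \in A).
Qed.

Section Weights.
Variables (R : realFieldType) (c : R) (p : seq pt).
Local Notation G := {ffun Dface p -> bool}.
Local Notation E := {ffun Dvert p -> bool}.

Definition vertex_weight (sp : pt -> bool) (v : pt) : R :=
  if ice_at sp v then (if typec_at sp v then c else 1) else 0.

Lemma spin_weight_prod (s : G) :
  spin_weight c s = \prod_(v : Dvert p) vertex_weight (spin_ext s) (val v).
Proof.
rewrite /spin_weight /vertex_weight.
have [/forallP ice|/forallPn[v not_ice]] := boolP (ice_config s); last first.
  by rewrite (bigD1 v) //= (negbTE not_ice) mul0r.
under eq_bigr => v _ do rewrite ice.
rewrite -big_mkcond prodr_const /Nc; congr (_ ^+ _).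
by apply: eq_card => v; rewrite !inE.
Qed.

(* [b] is [xi(v)]; [o] and [e] say whether the odd, resp. even, faces of [v]
   carry equal spins. *)
Definition joint_vertex_weight (b o e : bool) : R :=
  if b then (if o then (if e then c - 1 else 1) else 0) else (if e then 1 else 0).

Lemma vertex_weight_kernel sp v b : c != 0 ->
  vertex_weight sp v * xi_kernel c sp v b =
  joint_vertex_weight b (~~ theta_at sp v) (~~ omega_at sp v).
Proof.
move=> c_neq0.
rewrite /vertex_weight /joint_vertex_weight /ice_at /typec_at /xi_kernel.
rewrite /theta_at /omega_at.
case: face_odd; case: (sp (fSW v)); case: (sp (fSE v)); case: (sp (fNW v));
  case: (sp (fNE v)); case: b => /=; rewrite ?mul0r ?mulr0 ?mulr1 ?mul1r //;
  try (by rewrite mulrCA mulfV // mulr1); by rewrite mulfV.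
Qed.

Definition split_weight (b l : bool) : R :=
  if b then (if l then 1 else c - 2) else (if l then 0 else 1).

Lemma joint_vertex_weight_split b o e :
  joint_vertex_weight b o e =
  \sum_(l : bool) split_weight b l * ((b ==> o) && (~~ l ==> e))%:R.
Proof.
rewrite big_bool /joint_vertex_weight /split_weight.
by case: b; case: o; case: e; rewrite /= ?mulr1 ?mulr0 ?addr0 ?add0r //; ring.
Qed.

Definition joint_weight (xi l : E) : R :=
  (\prod_v split_weight (xi v) (l v)) * #|compatible xi l|%:R.

Lemma FKIs_numerator (xi : E) : c != 0 ->
  \sum_(s : G) spin_weight c s * \prod_v xi_kernel c (spin_ext s) (val v) (xi v)
  = \sum_l joint_weight xi l.
Proof.
move=> c_neq0.
under eq_bigr => s _.
  rewrite spin_weight_prod -big_split /=.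
  under eq_bigr => v _ do rewrite vertex_weight_kernel // joint_vertex_weight_split.
  rewrite bigA_distr_bigA /=.
over.
rewrite exchange_big /=; apply: eq_bigr => l _.
under eq_bigr => s _ do rewrite big_split /= prodr_natr_bool.
rewrite -mulr_sumr /joint_weight -sumr_natr_mem; congr (_ * _).
apply: eq_bigr => s _; congr (nat_of_bool _)%:R; rewrite /compatible !inE.
apply/forallP/andP => [comp|[/forallP oddP /forallP evenP] v].
  by split; apply/forallP => v; move: (comp v); rewrite ?ffunE => /andP[].
by move: (oddP v) (evenP v); rewrite ffunE => -> ->.
Qed.

Hypothesis c_ge2 : 2 <= c.

Lemma split_weight_ge0 b l : 0 <= split_weight b l.
Proof. by rewrite /split_weight; case: b; case: l; rewrite // subr_ge0. Qed.

Lemma split_weight_lattice b b' l l' :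
  split_weight b l * split_weight b' l' <=
  split_weight (b || b') (l || l') * split_weight (b && b') (l && l').
Proof.
have c2_ge0 : 0 <= c - 2 by rewrite subr_ge0.
by rewrite /split_weight; case: b; case: b'; case: l; case: l';
  rewrite /= ?mulr0 ?mul0r ?mulr1 ?mul1r.
Qed.

Lemma prod_split_weight_ge0 (xi l : E) : 0 <= \prod_v split_weight (xi v) (l v).
Proof. by apply: prodr_ge0 => v _; apply: split_weight_ge0. Qed.

Lemma joint_weight_ge0 xi l : 0 <= joint_weight xi l.
Proof. by rewrite mulr_ge0 ?prod_split_weight_ge0. Qed.

Lemma joint_weight_lattice xi eta l l' :
  joint_weight xi l * joint_weight eta l' <=
  joint_weight (cfg_join xi eta) (cfg_join l l') *
  joint_weight (cfg_meet xi eta) (cfg_meet l l').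
Proof.
rewrite /joint_weight mulrACA [X in _ <= X]mulrACA.
apply: ler_pM; rewrite ?mulr_ge0 ?prod_split_weight_ge0 //.
  rewrite -!big_split /=; apply: ler_prod => v _.
  by rewrite mulr_ge0 ?split_weight_ge0 // !ffunE split_weight_lattice.
by rewrite -!natrM ler_nat card_compatible_lattice.
Qed.

End Weights.

Lemma xi_kernel_sum (R : realFieldType) (c : R) sp v : c != 0 ->
  \sum_(b : bool) xi_kernel c sp v b = 1.
Proof.
move=> c_neq0; rewrite big_bool /xi_kernel.
case: theta_at; case: omega_at => /=; rewrite ?addr0 ?add0r //.
by rewrite -mulrDl subrK divff.
Qed.

Section FKIs.
Variables (R : realFieldType) (c : R) (p : seq pt).
Hypothesis c_ge2 : 2 <= c.
Local Notation G := {ffun Dface p -> bool}.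
Local Notation E := {ffun Dvert p -> bool}.

Let c_gt0 : 0 < c.
Proof. exact: lt_le_trans c_ge2. Qed.

Lemma spin_weight_ge0 (s : G) : 0 <= spin_weight c s.
Proof. by rewrite /spin_weight; case: ifP => // _; rewrite exprn_ge0 // ltW ?c_gt0. Qed.

Lemma partition_gt0 : 0 < \sum_(s : G) spin_weight c s.
Proof.
pose plus : G := [ffun=> true].
have spin_ext_plus f : spin_ext plus f.
  by rewrite /spin_ext; case: insub => // g; rewrite ffunE.
have plus_ice : ice_config plus.
  by apply/forallP => v; rewrite /ice_at !spin_ext_plus.
have plus_gt0 : 0 < spin_weight c plus.
  by rewrite /spin_weight plus_ice exprn_gt0 ?c_gt0.
rewrite (bigD1 plus) //=; apply: (lt_le_trans plus_gt0).
by rewrite lerDl sumr_ge0 // => s _; apply: spin_weight_ge0.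
Qed.

Lemma FKIs_marginal (xi : E) :
  FKIs c xi = (\sum_(s : G) spin_weight c s)^-1 * \sum_l joint_weight c xi l.
Proof.
rewrite -FKIs_numerator ?gt_eqF ?c_gt0 // mulr_sumr /FKIs.
by apply: eq_bigr => s _; rewrite /Spin mulrAC mulrC.
Qed.

Lemma FKIs_ge0 (xi : E) : 0 <= FKIs c xi.
Proof.
rewrite FKIs_marginal mulr_ge0 //; first by rewrite invr_ge0 ltW ?partition_gt0.
by apply: sumr_ge0 => l _; apply: joint_weight_ge0.
Qed.

Lemma FKIs_sum1 : \sum_(xi : E) FKIs c xi = 1.
Proof.
rewrite /FKIs exchange_big /= (eq_bigr (fun s => Spin c s)) => [|s _].
  by rewrite /Spin -mulr_suml divff // gt_eqF ?partition_gt0.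
rewrite -mulr_sumr.
rewrite -(bigA_distr_bigA (fun v b => xi_kernel c (spin_ext s) (val v) b)) /=.
by rewrite big1 ?mulr1 // => v _; rewrite xi_kernel_sum ?gt_eqF ?c_gt0.
Qed.

Lemma FKIs_lattice : FKG_lattice (FKIs c (p := p)).
Proof.
move=> xi eta; rewrite !FKIs_marginal.
apply: (FKG_latticeZ (mu := fun xi => \sum_l joint_weight c xi l)).
  by rewrite invr_ge0 ltW ?partition_gt0.
apply: FKG_lattice_marginal; [exact: joint_weight_ge0|exact: joint_weight_lattice].
Qed.

End FKIs.

Theorem proposition7p4 (R : realFieldType) (c : R) (p : seq pt) :
  2 <= c -> simple_cycle p ->
  FKG_lattice (FKIs c (p := p)) /\ positively_associated (FKIs c (p := p)).
Proof.
(* Only [c >= 2] matters: FKIs is well defined and FKG for every list [p]. *)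
move=> c_ge2 _; split; first exact: FKIs_lattice.
apply: FKG_positively_associated.
- exact: FKIs_ge0.
- exact: FKIs_sum1.
- exact: FKIs_lattice.
Qed.
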